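(* Assume $\Lambda(\mathbf{f}_i,P)$ is a nonnegative integer for every $i$ and every $P\in\mathcal{U}$, and let $M=N\max_{i,P\in\mathcal{U}}\Lambda(\mathbf{f}_i,P)$. Let $\kappa^*\in\arg\max_{1\le\kappa\le M}\kappa/N_\kappa$. Then $\frac{\kappa^*}{N_{\kappa^*}}\ge\min_{P\in\mathcal{U}}\Lambda(w^*_N,P)\ge\frac{N_0}{N_0+1}\min_{P\in\mathcal{U}}\Lambda(w^*,P)$.
   Context: Setting: a simple directed acyclic graph $G=(V,E)$ with capacities $C\in\mathbb{R}_{\ge0}^E$, $s,t$ joined by a directed path, budget $0<\gamma\le\min_eC(e)$, and an uncertainty set $\mathcal{U}$ of finitely many sets $P$ of user paths (directed paths $p_1,\dots,p_k$ with initial values $\lambda_i\ge0$, $\sum_{i:e\in p_i}\lambda_i\le C(e)$). For an $s$-$t$ flow $\mathbf{f}$ ($0\le\mathbf{f}\le C$, conservation at $v\ne s,t$), $T(\mathbf{f},P)$ is the optimal value of: maximize $\sum_i\tilde\lambda_i$ s.t. $\sum_{i:e\in p_i}\tilde\lambda_i\le C(e)-\mathbf{f}(e)$, $0\le\tilde\lambda_i\le\lambda_i$; $\Lambda(\mathbf{f},P)=\sum_i\lambda_i-T(\mathbf{f},P)$; for a strategy (probability distribution) $w$, $\Lambda(w,P)=\sum_{\mathbf{f}}w(\mathbf{f})\Lambda(\mathbf{f},P)$. Let $\mathbf{f}_1,\dots,\mathbf{f}_L$ enumerate the single-path flows of value $\gamma$ (for each directed $s$-$t$ path, the flow equal to $\gamma$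 on its edges and $0$ elsewhere). Fix a positive integer $N_0$; an $N_0$-bounded strategy is a probability distribution on $\{\mathbf{f}_1,\dots,\mathbf{f}_L\}$ with at most $N_0$ nonzero probabilities, and $w^*$ is one maximizing $\min_{P\in\mathcal{U}}\Lambda(w,P)$ among them. Let $N=N_0^2+N_0$, $\mathcal{W}_N$ the set of probability distributions on $\{\mathbf{f}_1,\dots,\mathbf{f}_L\}$ all of whose probabilities lie in $\{\beta/N:\beta\in\{0,\dots,N\}\}$, and $w^*_N$ one maximizing $\min_{P\in\mathcal{U}}\Lambda(w,P)$ over $\mathcal{W}_N$. For a positive integer $\kappa$, $ILP(\kappa)$ is: minimize $\sum_ix_i$ subject to $\sum_ix_i\Lambda(\mathbf{f}_i,P)\ge\kappa$ for all $P\in\mathcal{U}$, $x_i\in\mathbb{N}$; $N_\kappa$ is its optimal value. *)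

From HB Require Import structures.
From mathcomp Require Import all_boot all_order all_algebra.
From mathcomp Require Import classical_sets reals.
Set Implicit Arguments. Unset Strict Implicit. Unset Printing Implicit Defensive.
Import Order.TTheory GRing.Theory Num.Theory.
Local Open Scope ring_scope.
Local Open Scope classical_set_scope.

Section NetworkDefs.
Variables (R : realType) (V : finType) (E : rel V).

Definition pedges (p : seq V) : seq (V * V) := zip p (behead p).

Definition is_dpath (p : seq V) : bool :=
  if p is x :: q then path E x q && uniq p else false.

(* simple digraph: no loops (a relation has no multiple edges) *)
Definition simple_graph : Prop := forall v, ~~ E v v.

Definition acyclic : Prop :=
  forall x (p : seq V), p != [::] -> path E x p -> last x p != x.

Definition is_stpath (s t : V) (p : seq V) : bool :=
  if p is x :: q then [&& x == s, path E x q, last x q == t & uniq p] else false.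

(* finite type of vertex sequences of length at most #|V| (contains all paths) *)
Definition pathT := {n : 'I_#|V|.+1 & n.-tuple V}.
Definition pseq (p : pathT) : seq V := tagged p.

Definition stpaths (s t : V) : {set pathT} := [set p : pathT | is_stpath s t (pseq p)].

Definition pflow (gamma : R) (p : seq V) : V -> V -> R :=
  fun u v => if (u, v) \in pedges p then gamma else 0.

(* a set P of user paths: list of (path, initial value lambda) *)
Definition userset := seq (seq V * R).

Definition valid_userset (C : V -> V -> R) (P : userset) : Prop :=
  (forall q, q \in P -> is_dpath q.1 /\ 0 <= q.2) /\
  (forall u v, E u v -> \sum_(q <- P | (u, v) \in pedges q.1) q.2 <= C u v).

Definition udef : seq V * R := ([::], 0).

(* T(f,P): optimal value of the LP  max sum_i lt_i  s.t. edge capacities and 0 <= lt_i <= lambda_i *)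
Definition Tval (C : V -> V -> R) (f : V -> V -> R) (P : userset) : R :=
  sup [set x : R | exists lt : 'I_(size P) -> R,
        (forall i, 0 <= lt i <= (nth udef P i).2) /\
        (forall u v, E u v ->
           \sum_(i < size P | (u, v) \in pedges (nth udef P i).1) lt i <= C u v - f u v) /\
        x = \sum_(i < size P) lt i].

Definition Lam (C : V -> V -> R) (f : V -> V -> R) (P : userset) : R :=
  \sum_(q <- P) q.2 - Tval C f P.

Definition Lamw (C : V -> V -> R) (s t : V) (gamma : R) (w : pathT -> R) (P : userset) : R :=
  \sum_(p in stpaths s t) w p * Lam C (pflow gamma (pseq p)) P.

Definition minU (U : seq userset) (g : userset -> R) : R :=
  \big[Num.min/g (head [::] U)]_(P <- U) g P.

Definition is_strategy (s t : V) (w : pathT -> R) : Prop :=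
  (forall p, 0 <= w p) /\ (forall p, p \notin stpaths s t -> w p = 0) /\
  \sum_(p in stpaths s t) w p = 1.

Definition bounded_strategy (s t : V) (N0 : nat) (w : pathT -> R) : Prop :=
  is_strategy s t w /\ (#|[set p | w p != 0%R]| <= N0)%N.

Definition in_WN (s t : V) (N : nat) (w : pathT -> R) : Prop :=
  is_strategy s t w /\ forall p, exists beta : nat, (beta <= N)%N /\ w p = beta%:R / N%:R.

Definition Nkappa (C : V -> V -> R) (s t : V) (gamma : R) (U : seq userset) (kappa : nat) : R :=
  inf [set y : R | exists x : pathT -> nat,
        (forall P, P \in U ->
           kappa%:R <= \sum_(p in stpaths s t) (x p)%:R * Lam C (pflow gamma (pseq p)) P) /\
        y = (\sum_(p in stpaths s t) x p)%:R].

Definition Mbound (C : V -> V -> R) (s t : V) (gamma : R) (U : seq userset) (N : nat) : R :=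
  N%:R * \big[Num.max/0]_(p in stpaths s t)
           \big[Num.max/0]_(P <- U) Lam C (pflow gamma (pseq p)) P.

End NetworkDefs.

(* Let m be the worst-case value min_P Lambda(w, P) of a strategy w. On the grid W_N
   the numbers N w(f_i) are integers, hence so is k := N m; if k >= 1, the vector
   N w is feasible for ILP(k) with total N, so N_k <= N and m = k/N <= k/N_k.
   Conversely, an N0-bounded strategy w is rounded up onto the grid 1/N with
   N = N0^2 + N0: floor(N0^2 w_i) + 1 units on each of the at most N0 support points
   use at most N0^2 + N0 units, the remaining ones go to a single path, and each
   weight becomes at least N0^2 w_i / N = N0/(N0+1) w_i. As Lambda >= 0, the
   worst-case value shrinks by at most that factor. *)

From HB Require Import structures.
From mathcomp Require Import boolp classical_sets reals.
From mathcomp Require Import all_boot all_order all_algebra.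
From mathcomp Require Import ring zify.
Import Order.TTheory GRing.Theory Num.Theory.
Set Implicit Arguments. Unset Strict Implicit. Unset Printing Implicit Defensive.
Local Open Scope ring_scope.

Section MinOverUncertaintySet.
Variables (R : realType) (V : finType) (U : seq (userset R V)) (g : userset R V -> R).

Lemma minU_le P : P \in U -> minU U g <= g P.
Proof. by move=> PU; apply: ge_bigmin_seq. Qed.

Lemma minU_ge a : U != [::] -> (forall P, P \in U -> a <= g P) -> a <= minU U g.
Proof.
case: U => // P0 U' _ ag; rewrite /minU big_seq.
by apply: le_bigmin => [|P]; [apply/ag/mem_head | apply: ag].
Qed.

Lemma minU_mem : U != [::] -> exists2 P, P \in U & minU U g = g P.
Proof.
case: U => // P0 U' _; rewrite /minU big_seq.
apply: (big_ind (fun x => exists2 P, P \in P0 :: U' & x = g P)).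
- by exists P0; rewrite ?mem_head.
- move=> x y [P PU ->] [Q QU ->].
  by rewrite /Num.min; case: ifP => _; [exists P | exists Q].
- by move=> P PU; exists P.
Qed.

End MinOverUncertaintySet.

Section GridDistributions.
Variables (R : realType) (T : finType) (A : {set T}).

Definition distribution_on (w : T -> R) : Prop :=
  (forall p, 0 <= w p) /\ (forall p, p \notin A -> w p = 0) /\ \sum_(p in A) w p = 1.

Definition grid_valued (N : nat) (w : T -> R) : Prop :=
  forall p, exists beta : nat, (beta <= N)%N /\ w p = beta%:R / N%:R.

Lemma distribution_on_mem w : distribution_on w -> exists p, p \in A.
Proof.
move=> [_ [_ w_sum]]; have [A0|[p Ap]] := set_0Vmem A; last by exists p.
by move: w_sum; rewrite A0 big_set0 => /eqP; rewrite eq_sym oner_eq0.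
Qed.

Lemma sum_support_le (w : T -> R) :
  (\sum_(p in A) (w p != 0%R : nat) <= #|[set p | w p != 0%R]%classic|)%N.
Proof.
rewrite -big_mkcondr /= sum1_card; apply: subset_leq_card.
by apply/subsetP => p; rewrite unfold_in in_setE /= => /andP[].
Qed.

Lemma round_up_weights (K n0 : nat) (w : T -> R) :
  distribution_on w -> (#|[set p | w p != 0%R]%classic| <= n0)%N ->
  exists c : T -> nat, [/\ forall p, p \notin A -> c p = 0%N,
    (\sum_(p in A) c p <= K + n0)%N & forall p, K%:R * w p <= (c p)%:R].
Proof.
move=> [w_ge0 [w_out w_sum]] supp_w.
exists (fun p => if w p != 0 then (Num.truncn (K%:R * w p)).+1 else 0%N); split.
- by move=> p /w_out->; rewrite eqxx.
- apply: (@leq_trans (\sum_(p in A) Num.truncn (K%:R * w p)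
                        + \sum_(p in A) (w p != 0%R : nat))%N).
    by rewrite -big_split /=; apply: leq_sum => p _; case: ifP; rewrite ?addn1.
  apply: leq_add; last exact: leq_trans (sum_support_le w) supp_w.
  have sumK : \sum_(p in A) K%:R * w p = K%:R :> R by rewrite -mulr_sumr w_sum mulr1.
  rewrite -(ler_nat R) natr_sum -[leRHS]sumK.
  by apply: ler_sum => p _; rewrite truncn_le mulr_ge0.
- move=> p; case: ifPn => [_|]; first exact/ltW/truncnS_gt.
  by rewrite negbK => /eqP->; rewrite mulr0.
Qed.

Lemma grid_above_counts (N : nat) (c : T -> nat) :
  (0 < N)%N -> (exists p, p \in A) -> (forall p, p \notin A -> c p = 0%N) ->
  (\sum_(p in A) c p <= N)%N ->
  exists2 w, distribution_on w /\ grid_valued N w & forall p, (c p)%:R / N%:R <= w p.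
Proof.
move=> N_gt0 [p0 Ap0] c_out c_sum.
set S := (\sum_(p in A) c p)%N in c_sum.
have c_le p : (c p <= S)%N.
  by case: (boolP (p \in A)) => [Ap|/c_out->//]; rewrite /S (bigD1 p) //= leq_addr.
pose beta p := (c p + (p == p0) * (N - S))%N.
have beta_out p : p \notin A -> beta p = 0%N.
  by move=> Ap; rewrite /beta c_out //; case: eqP Ap => // ->; rewrite Ap0.
have NR0 : (N%:R : R) != 0 by rewrite pnatr_eq0 -lt0n.
exists (fun p => (beta p)%:R / N%:R); first split; [split; [|split]| |].
- by move=> p; rewrite divr_ge0.
- by move=> p /beta_out->; rewrite mul0r.
- rewrite -mulr_suml -natr_sum big_split /= -/S (bigD1 p0) //= eqxx mul1n.
  by rewrite big1 ?addn0 => [|p /andP[_ /negbTE->]]; rewrite ?subnKC ?divff.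
- move=> p; exists (beta p); split => //; rewrite /beta.
  by have := c_le p; case: (p == p0); lia.
- by move=> p; rewrite ler_pM2r ?invr_gt0 ?ltr0n // ler_nat leq_addr.
Qed.

Lemma round_to_grid (n0 : nat) (w : T -> R) :
  (0 < n0)%N -> distribution_on w -> (#|[set p | w p != 0%R]%classic| <= n0)%N ->
  exists2 w', distribution_on w' /\ grid_valued (n0 ^ 2 + n0) w'
    & forall p, n0%:R / (n0%:R + 1) * w p <= w' p.
Proof.
move=> n0_gt0 w_distr supp_w.
have [c [c_out c_sum c_ge]] := round_up_weights (n0 ^ 2) w_distr supp_w.
have N_gt0 : (0 < n0 ^ 2 + n0)%N by rewrite addn_gt0 n0_gt0 orbT.
have [w' w'_grid w'_ge] :=
  grid_above_counts N_gt0 (distribution_on_mem w_distr) c_out c_sum.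
exists w' => // p; apply: le_trans (w'_ge p).
have -> : n0%:R / (n0%:R + 1) * w p = (n0 ^ 2)%:R * w p / (n0 ^ 2 + n0)%:R :> R.
  rewrite natrD natrX; field.
  by rewrite !lt0r_neq0 ?addr_gt0 ?exprn_gt0 ?ltr0n.
by rewrite ler_pM2r ?invr_gt0 ?ltr0n.
Qed.

End GridDistributions.

Section MixedValues.
Variables (R : realType) (T : finType) (A : {set T}) (X : eqType).
Variables (U : seq X) (L : T -> X -> R).

Definition mixed_value (w : T -> R) (P : X) : R := \sum_(p in A) w p * L p P.

Definition ilp_feasible (k : nat) (x : T -> nat) : Prop :=
  forall P, P \in U -> k%:R <= \sum_(p in A) (x p)%:R * L p P.

Definition ilp_value (k : nat) : R :=
  inf [set y : R | exists x, ilp_feasible k x /\ y = (\sum_(p in A) x p)%:R]%classic.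

Lemma ilp_value_ge0 k : 0 <= ilp_value k.
Proof.
rewrite /ilp_value; set S := (X in inf X).
have [[y Sy]|S0] := pselect (exists y, S y); last by rewrite inf_out // => -[].
by apply: lb_le_inf; [exists y | move=> _ [x [_ ->]]].
Qed.

Lemma ilp_value_le k x :
  ilp_feasible k x -> ilp_value k <= (\sum_(p in A) x p)%:R.
Proof.
move=> x_feas; apply: ge_inf; last by exists x.
by exists 0 => _ [x' [_ ->]].
Qed.

Lemma ilp_value_ge1 k x P :
  (0 < k)%N -> P \in U -> ilp_feasible k x -> 1 <= ilp_value k.
Proof.
move=> k_gt0 PU x_feas; apply: lb_le_inf; first by exists (\sum_(p in A) x p)%:R, x.
move=> _ [x' [x'_feas ->]]; rewrite ler1n lt0n; apply: contraTneq (x'_feas P PU).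
move=> /eqP; rewrite sum_nat_eq0 => /forall_inP x'0.
rewrite -ltNge big1 ?ltr0n // => p pA.
by rewrite (eqP (x'0 p pA)) mul0r.
Qed.

Lemma mixed_value_le_max w P : distribution_on A w -> P \in U ->
  mixed_value w P <= \big[Num.max/0]_(p in A) \big[Num.max/0]_(Q <- U) L p Q.
Proof.
move=> [w_ge0 [_ w_sum]] PU; rewrite -[leRHS]mul1r -w_sum mulr_suml.
apply: ler_sum => p pA; rewrite ler_wpM2l //.
apply: le_trans (le_bigmax_cond _ _ pA); exact: le_bigmax_seq.
Qed.

Lemma mixed_value_ler_scaled c w w' P :
  (forall p, p \in A -> 0 <= L p P) -> (forall p, p \in A -> c * w p <= w' p) ->
  c * mixed_value w P <= mixed_value w' P.
Proof.
move=> L_ge0 w'_ge; rewrite mulr_sumr; apply: ler_sum => p pA.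
by rewrite mulrA ler_wpM2r ?L_ge0 ?w'_ge.
Qed.

Lemma grid_scaled_nat N (w : T -> R) p : grid_valued N w -> N%:R * w p \is a Num.nat.
Proof.
move=> /(_ p)[beta [_ ->]]; have [->|N_gt0] := posnP N; first by rewrite mul0r.
by rewrite mulrC divfK ?natr_nat // pnatr_eq0 -lt0n.
Qed.

Lemma grid_mixed_value_nat N w P : grid_valued N w ->
  (forall p, p \in A -> L p P \is a Num.nat) -> N%:R * mixed_value w P \is a Num.nat.
Proof.
move=> w_grid L_nat; rewrite mulr_sumr; apply: rpred_sum => p pA.
by rewrite mulrA rpredM ?L_nat ?grid_scaled_nat.
Qed.

Lemma grid_scaled_feasible N w k : distribution_on A w -> grid_valued N w ->
  (forall P, P \in U -> k%:R <= N%:R * mixed_value w P) ->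
  exists2 x, ilp_feasible k x & (\sum_(p in A) x p)%:R = N%:R :> R.
Proof.
move=> [_ [_ w_sum]] w_grid k_le.
have xE p : (Num.truncn (N%:R * w p))%:R = N%:R * w p.
  by rewrite truncnK ?grid_scaled_nat.
exists (fun p => Num.truncn (N%:R * w p)).
  by move=> P PU; under eq_bigr do rewrite xE -mulrA; rewrite -mulr_sumr k_le.
by rewrite natr_sum (eq_bigr _ (fun p _ => xE p)) -mulr_sumr w_sum mulr1.
Qed.

End MixedValues.

Section GridStrategies.
Variables (R : realType) (V : finType) (T : finType) (A : {set T}).
Variables (U : seq (userset R V)) (L : T -> userset R V -> R).
Hypothesis U_neq0 : U != [::].

Lemma grid_min_value_le_ratio N w : (0 < N)%N ->
  (forall p P, p \in A -> P \in U -> L p P \is a Num.nat) ->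
  distribution_on A w -> grid_valued N w ->
  minU U (mixed_value A L w) = 0 \/
  exists2 k : nat,
    (0 < k)%N /\ k%:R <= N%:R * \big[Num.max/0]_(p in A) \big[Num.max/0]_(Q <- U) L p Q
    & minU U (mixed_value A L w) <= k%:R / ilp_value A U L k.
Proof.
move=> N_gt0 L_nat w_distr w_grid.
have [P0 P0U minE] := minU_mem (mixed_value A L w) U_neq0.
have /natrP[k kE] :=
  grid_mixed_value_nat (P := P0) w_grid (fun p pA => L_nat p P0 pA P0U).
have NR_gt0 : (0 : R) < N%:R by rewrite ltr0n.
have mE : minU U (mixed_value A L w) = k%:R / N%:R.
  by rewrite minE -kE [N%:R * _]mulrC mulfK ?lt0r_neq0.
have [k0|k_gt0] := posnP k; [by left; rewrite mE k0 mul0r | right; exists k].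
  by split=> //; rewrite -kE ler_wpM2l ?ler0n //; exact: mixed_value_le_max.
have k_le P : P \in U -> k%:R <= N%:R * mixed_value A L w P.
  by move=> PU; rewrite -kE ler_wpM2l ?ler0n // -minE minU_le.
have [x x_feas x_sum] := grid_scaled_feasible w_distr w_grid k_le.
have ilp_le : ilp_value A U L k <= N%:R by rewrite -x_sum ilp_value_le.
have ilp_ge1 : 1 <= ilp_value A U L k := ilp_value_ge1 k_gt0 P0U x_feas.
rewrite mE ler_wpM2l ?ler0n // lef_pV2 ?posrE //; exact: lt_le_trans ltr01 ilp_ge1.
Qed.

Lemma min_value_round_to_grid n0 w : (0 < n0)%N ->
  (forall p P, p \in A -> P \in U -> 0 <= L p P) ->
  distribution_on A w -> (#|[set p | w p != 0%R]%classic| <= n0)%N ->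
  exists2 w', distribution_on A w' /\ grid_valued (n0 ^ 2 + n0) w'
    & n0%:R / (n0%:R + 1) * minU U (mixed_value A L w) <= minU U (mixed_value A L w').
Proof.
move=> n0_gt0 L_ge0 w_distr supp_w.
have [w' w'_grid w'_ge] := round_to_grid n0_gt0 w_distr supp_w.
exists w' => //; apply: minU_ge => // P PU.
apply: le_trans
  (mixed_value_ler_scaled (fun p pA => L_ge0 p P pA PU) (fun p _ => w'_ge p)).
by rewrite ler_wpM2l ?minU_le // divr_ge0 ?addr_ge0.
Qed.

End GridStrategies.

Theorem lemma5 (R : realType) (V : finType) (E : rel V)
  (C : V -> V -> R) (s t : V) (gamma : R) (U : seq (userset R V)) (N0 : nat)
  (wstar wNstar : pathT V -> R) (kstar : nat) :
  simple_graph E -> acyclic E ->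
  (forall u v, E u v -> 0 <= C u v) ->
  (exists p : seq V, is_stpath E s t p) ->
  0 < gamma -> (forall u v, E u v -> gamma <= C u v) ->
  U != [::] -> (forall P, P \in U -> valid_userset E C P) ->
  (forall p, p \in stpaths E s t -> forall P, P \in U ->
     exists n : nat, Lam E C (pflow gamma (pseq p)) P = n%:R) ->
  (0 < N0)%N ->
  let N := (N0 ^ 2 + N0)%N in
  let LamW w P := Lamw E C s t gamma w P in
  bounded_strategy E s t N0 wstar ->
  (forall w, bounded_strategy E s t N0 w ->
     minU U (LamW w) <= minU U (LamW wstar)) ->
  in_WN E s t N wNstar ->
  (forall w, in_WN E s t N w -> minU U (LamW w) <= minU U (LamW wNstar)) ->
  let M := Mbound E C s t gamma U N in
  1 <= (kstar%:R : R) <= M ->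
  (forall kappa : nat, 1 <= (kappa%:R : R) <= M ->
     kappa%:R / Nkappa E C s t gamma U kappa <=
     kstar%:R / Nkappa E C s t gamma U kstar) ->
  kstar%:R / Nkappa E C s t gamma U kstar >= minU U (LamW wNstar) /\
  minU U (LamW wNstar) >= N0%:R / (N0%:R + 1) * minU U (LamW wstar).
Proof.
move=> _ _ _ _ _ _ U_neq0 _ Lam_nat N0_gt0 N LamW [ws_distr ws_supp] _
  [wN_distr wN_grid] wN_opt M _ kstar_opt.
(* With A := stpaths E s t and this L, the notions is_strategy, in_WN, Lamw and
   Nkappa are by definition distribution_on A, distribution_on A /\ grid_valued,
   mixed_value A L and ilp_value A U L. *)
pose L p P := Lam E C (pflow gamma (pseq p)) P.
have L_nat p P : p \in stpaths E s t -> P \in U -> L p P \is a Num.nat.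
  by move=> pA PU; apply/natrP; exact: Lam_nat.
have N_gt0 : (0 < N)%N by rewrite addn_gt0 N0_gt0 orbT.
split.
- have [->|[k [k_gt0 k_le] min_le]] :=
    grid_min_value_le_ratio U_neq0 N_gt0 L_nat wN_distr wN_grid.
    by rewrite divr_ge0 ?ilp_value_ge0.
  by apply: le_trans min_le (kstar_opt k _); rewrite ler1n k_gt0.
- have [w w_grid w_ge] := min_value_round_to_grid U_neq0 N0_gt0
    (fun p P pA PU => natr_ge0 (L_nat p P pA PU)) ws_distr ws_supp.
  exact: le_trans w_ge (wN_opt w w_grid).
Qed.
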